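(* For a connected graph $G=(V,E)$ with $|V|=n$ and $1\le k\le n$, \[Z_{\mu^*_k}\le\binom{n-1}{k-1}T(G)\le n^{k-1}T(G),\] where $T(G)$ is the number of spanning trees of $G$.
   Context: $Z_{\mu^*_k}=\sum_{\{P_1,\dots,P_k\}}\prod_{i=1}^kT(P_i)$, the sum over partitions of $V$ into $k$ nonempty parts, where $T(P_i)$ is the number of spanning trees of the induced subgraph $G[P_i]$ (zero if $G[P_i]$ is disconnected); equivalently, the number of forests of $G$ with exactly $n-k$ edges. *)

(* A finite simple graph on a finType V is given by a
   symmetric irreflexive relation e. Edges are 2-element vertex sets. *)
From mathcomp Require Import all_boot.
From mathcomp Require Import boolp.
Set Implicit Arguments. Unset Strict Implicit. Unset Printing Implicit Defensive.

Section Graphs.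
Variables (V : finType) (e : rel V).

Definition edge_set : {set {set V}} :=
  [set [set x; y] | x in V, y in V & e x y].

Definition induced_edges (B : {set V}) : {set {set V}} :=
  [set f in edge_set | f \subset B].

Definition adjF (F : {set {set V}}) : rel V := fun x y => [set x; y] \in F.

Definition has_cycle (F : {set {set V}}) : Prop :=
  exists s : seq V, 2 < size s /\ ucycle (adjF F) s.

Definition spanning_tree_of (B : {set V}) (F : {set {set V}}) : Prop :=
  [/\ F \subset induced_edges B,
      (forall x y, x \in B -> y \in B -> connect (adjF F) x y)
    & ~ has_cycle F].

Definition num_spanning_trees (B : {set V}) : nat :=
  #|[set F : {set {set V}} | `[< spanning_tree_of B F >] ]|.

Definition Zmu (k : nat) : nat :=
  \sum_(P in [set P : {set {set V}} | partition P [set: V] && (#|P| == k)])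
     \prod_(B in P) num_spanning_trees B.

Definition graph_connected : Prop := forall x y : V, connect e x y.

End Graphs.

From mathcomp Require Import all_boot boolp zify.
Set Implicit Arguments. Unset Strict Implicit. Unset Printing Implicit Defensive.

(* A partition of the vertices into k blocks together with a spanning tree of
   each block determines the forest formed by the union of these trees: its
   components are the blocks and each tree is its restriction to its block.
   This forest is acyclic with n - k edges, so Z is at most the number of such
   forests. Every forest of the connected graph G extends to a spanning tree,
   which has n - 1 edges and hence contains C(n-1, n-k) = C(n-1, k-1) forests
   with n - k edges. *)

Section ConnectIn.
Variables (T : finType) (r r' : rel T).

Lemma connect_stable (a : pred T) x y :
  (forall u v, a u -> r u v -> a v) -> a x -> connect r x y -> a y.
Proof.
move=> ra ax /connectP [p pth ->]; elim: p x ax pth => //= z p IHp x ax.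
by case/andP=> rxz; apply: IHp; apply: ra rxz.
Qed.

Lemma connect_sub_in (a : pred T) x y :
  (forall u v, a u -> r u v -> r' u v && a v) -> a x -> connect r x y -> connect r' x y.
Proof.
move=> rr' ax cxy.
suff /andP [] : a y && connect r' x y by [].
apply: (connect_stable (a := fun z => a z && connect r' x z)) cxy; last by rewrite ax connect0.
move=> u v /andP [au cxu] /(rr' _ _ au) /andP [r'uv ->].
exact: connect_trans cxu (connect1 r'uv).
Qed.

End ConnectIn.

Section EdgeSets.
Variable V : finType.
Implicit Types (F : {set {set V}}) (a b u v x y : V).

Lemma adjF_sym F : symmetric (adjF F).
Proof. by move=> x y; rewrite /adjF setUC. Qed.

Lemma connect_adjF_sym F : connect_sym (adjF F).
Proof. exact/sym_connect_sym/adjF_sym. Qed.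

Lemma connect_adjF_subset F1 F2 :
  F1 \subset F2 -> subrel (connect (adjF F1)) (connect (adjF F2)).
Proof. by move=> sF; apply: connect_sub => x y /(subsetP sF) xy; apply: connect1. Qed.

Lemma set2_eq_cases a b u v :
  [set a; b] = [set u; v] -> (a = u /\ b = v) \/ (a = v /\ b = u).
Proof.
move=> E.
have: a \in [set u; v] by rewrite -E !inE eqxx.
have: b \in [set u; v] by rewrite -E !inE eqxx orbT.
have: u \in [set a; b] by rewrite E !inE eqxx.
have: v \in [set a; b] by rewrite E !inE eqxx orbT.
by rewrite !inE; do 4 (case/orP=> /eqP ?); subst; auto.
Qed.

Lemma connect_setU1 F u v a b :
  connect (adjF ([set u; v] |: F)) a b ->
  [|| connect (adjF F) a b, connect (adjF F) a u && connect (adjF F) v b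
    | connect (adjF F) a v && connect (adjF F) u b].
Proof.
set c := connect (adjF F).
apply: (connect_stable (a := fun w => [|| c a w, c a u && c v w | c a v && c u w]));
  last by rewrite /c connect0.
move=> w w' hw; rewrite /adjF in_setU1.
case/orP=> [/eqP/set2_eq_cases [[? ?]|[? ?]] | ww']; [subst w w' | subst w w' | ].
- by case/or3P: hw => [-> | /andP [-> _] | /andP [-> _]]; rewrite /c ?connect0 ?orbT.
- by case/or3P: hw => [-> | /andP [-> _] | /andP [-> _]]; rewrite /c ?connect0 ?orbT.
have cww' : c w w' by apply: connect1.
rewrite /c in hw cww' *.
by case/or3P: hw => [h | /andP [-> h] | /andP [-> h]]; rewrite (connect_trans h cww') ?orbT.
Qed.

(* Acyclicity as a decidable property: every edge of [F] is a bridge. *)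
Definition acyclicb F : bool :=
  [forall x, forall y, ([set x; y] \in F) && (x != y) ==>
     ~~ connect (adjF (F :\ [set x; y])) x y].

Lemma acyclicb_bridge F x y :
  acyclicb F -> [set x; y] \in F -> x != y -> ~~ connect (adjF (F :\ [set x; y])) x y.
Proof. by move=> /forallP /(_ x) /forallP /(_ y) + Fxy xy; rewrite Fxy xy. Qed.

Lemma acyclicbN_has_cycle F : ~~ acyclicb F -> has_cycle F.
Proof.
case/forallPn=> x /forallPn [y]; rewrite negb_imply negbK => /andP [/andP [Fxy xy]].
rewrite connect_adjF_sym => /connectP [p pth lastp].
case: (shortenP pth) lastp => q pq uq _ lastq.
exists (y :: q); split.
  case: q pq uq lastq => [|z [|w q]] //= => [_ _ /eqP | /andP [+ _] _ zx].
    by rewrite (negbTE xy).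
  by rewrite -zx /adjF setUC setD11.
rewrite /ucycle uq andbT /= rcons_path -lastq /adjF Fxy andbT.
by apply: sub_path pq => u v; rewrite /adjF in_setD1 => /andP [].
Qed.

Lemma acyclicb_no_cycle F : acyclicb F -> ~ has_cycle F.
Proof.
move=> acF [[|x [|y [|z r]]] [//= _ /andP [/= /andP [Fxy pyx] us]]].
move: us; rewrite !inE !negb_or -!andbA => /and5P [xy xz _ yz /andP [yr _]].
have setD1_adjF c u w : c \in [set x; y] -> c != u -> c != w ->
    adjF F u w -> adjF (F :\ [set x; y]) u w.
  rewrite /adjF in_setD1 => cxy cu cw ->; rewrite andbT.
  by apply: contraTneq cxy => <-; rewrite !inE negb_or cu cw.
have /negP := acyclicb_bridge acF Fxy xy; rewrite connect_adjF_sym; apply.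
apply/connectP; exists (z :: rcons r x); last by rewrite /= last_rcons.
move: pyx => /= /andP [Fyz pzx]; rewrite (setD1_adjF x) ?setU11 //=.
apply: (sub_in_path (P := predC1 y)) pzx => [u w /= uy wy|].
  by apply: (setD1_adjF y); rewrite 1?eq_sym // !inE eqxx orbT.
rewrite /= all_rcons /= (eq_sym z) yz xy; apply/allP => w wr /=.
by apply: contraNneq yr => <-.
Qed.

Lemma acyclicbP F : reflect (~ has_cycle F) (acyclicb F).
Proof.
apply: (iffP idP); first exact: acyclicb_no_cycle.
by move=> NcF; apply/negPn/negP => /acyclicbN_has_cycle.
Qed.

Lemma acyclicb_subset F1 F2 : F1 \subset F2 -> acyclicb F2 -> acyclicb F1.
Proof.
move=> sF acF; apply/forallP => x; apply/forallP => y; apply/implyP => /andP [F1xy xy].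
apply: contra (acyclicb_bridge acF (subsetP sF _ F1xy) xy); apply: connect_adjF_subset.
exact: setSD.
Qed.

Lemma acyclicbU1 F u v :
  acyclicb F -> ~~ connect (adjF F) u v -> u != v -> acyclicb ([set u; v] |: F).
Proof.
move=> acF Nuv uv; apply/forallP => x; apply/forallP => y; apply/implyP => /andP [Fxy xy].
have [E|NE] := eqVneq [set x; y] [set u; v].
  have sF : ([set u; v] |: F) :\ [set x; y] \subset F.
    by apply/subsetP => f; rewrite E in_setD1 in_setU1 => /andP [/negbTE ->].
  apply: contra Nuv => /(connect_adjF_subset sF).
  by case: (set2_eq_cases E) => [[-> ->] | [-> ->]] //; rewrite connect_adjF_sym.
have {}Fxy : [set x; y] \in F by move: Fxy; rewrite in_setU1 (negbTE NE).
have sF : ([set u; v] |: F) :\ [set x; y] \subset [set u; v] |: (F :\ [set x; y]).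
  apply/subsetP => f; rewrite in_setD1 !in_setU1 in_setD1.
  by case/andP=> -> /orP [] ->; rewrite ?orbT.
have lift := connect_adjF_subset (subD1set F [set x; y]).
have cxy : connect (adjF F) x y by apply: connect1.
apply/negP => /(connect_adjF_subset sF) /connect_setU1.
case/or3P=> [cxy' | /andP [cxu cvy] | /andP [cxv cuy]].
- by move/negP: (acyclicb_bridge acF Fxy xy).
- move/negP: Nuv; apply; rewrite connect_adjF_sym in cxu; rewrite connect_adjF_sym in cvy.
  exact: connect_trans (lift _ _ cxu) (connect_trans cxy (lift _ _ cvy)).
- move/negP: Nuv; apply; rewrite connect_adjF_sym in cxy.
  exact: connect_trans (lift _ _ cuy) (connect_trans cxy (lift _ _ cxv)).
Qed.

End EdgeSets.

Section SpanningTrees.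
Variables (V : finType) (e : rel V).
Implicit Types (F : {set {set V}}) (B C : {set V}) (a u v x y z : V).

Lemma edge_setP f : reflect (exists x y, e x y /\ f = [set x; y]) (f \in edge_set e).
Proof.
apply: (iffP imset2P) => [[x y _] | [x [y [exy ->]]]].
  by rewrite inE => exy ->; exists x, y.
by exists x y; rewrite ?inE.
Qed.

Lemma induced_edges_subset B : induced_edges e B \subset edge_set e.
Proof. by apply/subsetP => f; rewrite inE => /andP []. Qed.

Lemma induced_edge_endpoints F B u v :
  F \subset induced_edges e B -> [set u; v] \in F -> (u \in B) && (v \in B).
Proof. by move=> sFB /(subsetP sFB); rewrite inE subUset !sub1set => /andP []. Qed.

Definition component F B a : {set V} := [set z in B | connect (adjF F) a z].

Section Components.
Variables (F : {set {set V}}) (B : {set V}).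
Hypothesis sFB : F \subset induced_edges e B.

Lemma component_closed a u v :
  [set u; v] \in F -> u \in component F B a -> v \in component F B a.
Proof.
move=> Fuv; rewrite !inE => /andP [_ cau].
have /andP [_ ->] := induced_edge_endpoints sFB Fuv.
by apply: connect_trans cau _; apply: connect1.
Qed.

Lemma connect_component a : a \in B ->
  {in component F B a &, forall x y,
     connect (adjF (F :&: induced_edges e (component F B a))) x y}.
Proof.
move=> aB; set C := component F B a.
have caz z : z \in C -> connect (adjF (F :&: induced_edges e C)) a z.
  rewrite inE => /andP [_]; apply: (connect_sub_in (a := fun z => z \in C)).
    move=> u v uC; rewrite /adjF => Fuv; have vC := component_closed Fuv uC.
    have Euv := subsetP (subset_trans sFB (induced_edges_subset B)) _ Fuv.
    by rewrite in_setI inE Fuv Euv subUset !sub1set uC vC.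
  by rewrite inE aB connect0.
by move=> x y /caz; rewrite connect_adjF_sym => cxa /caz; apply: connect_trans.
Qed.

Lemma card_edges_split C1 C2 :
  B = C1 :|: C2 -> [disjoint C1 & C2] ->
  (forall u v, [set u; v] \in F -> u \in C1 -> v \in C1) ->
  (forall u v, [set u; v] \in F -> u \in C2 -> v \in C2) ->
  #|F| = #|F :&: induced_edges e C1| + #|F :&: induced_edges e C2|.
Proof.
move=> BC dC cl1 cl2.
have sFE := subset_trans sFB (induced_edges_subset B).
have splitF : F = (F :&: induced_edges e C1) :|: (F :&: induced_edges e C2).
  apply/setP => f; apply/idP/idP => [Ff|]; last by rewrite !inE => /orP [] /andP [].
  have /edge_setP [u [v [_ fuv]]] := subsetP sFE _ Ff; subst f.
  have /andP [uB _] := induced_edge_endpoints sFB Ff.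
  rewrite !inE Ff (subsetP sFE _ Ff) !subUset !sub1set /=.
  move: uB; rewrite BC inE => /orP [uC | uC].
    by rewrite uC (cl1 _ _ Ff uC).
  by rewrite uC (cl2 _ _ Ff uC) orbT.
have disjF : (F :&: induced_edges e C1) :&: (F :&: induced_edges e C2) = set0.
  apply/setP => f; rewrite !inE; apply/negP => /andP [/and3P [Ff _ sf1] /and3P [_ _ sf2]].
  have /edge_setP [u [v [_ fuv]]] := subsetP sFE _ Ff; subst f.
  move: sf1 sf2; rewrite !subUset !sub1set => /andP [u1 _] /andP [u2 _].
  by rewrite (disjointFr dC u1) in u2.
by rewrite {1}splitF cardsU disjF cards0 subn0.
Qed.

End Components.

Lemma component_bridge F B x y :
  (forall z, z \in B -> connect (adjF F) x z) -> [set x; y] \in F ->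
  B = component (F :\ [set x; y]) B x :|: component (F :\ [set x; y]) B y.
Proof.
move=> cx Fxy; apply/setP => z; rewrite !inE -andb_orr.
apply/idP/idP => [zB | /andP [] //]; rewrite zB /=.
have := cx z zB; rewrite -{1}(setD1K Fxy) => /connect_setU1.
by case/or3P=> [-> | /andP [_ ->] | /andP [_ ->]]; rewrite ?orbT.
Qed.

Lemma card_spanning_tree B F :
  irreflexive e -> spanning_tree_of e B F -> #|F| = #|B| - 1.
Proof.
move=> irr_e; have [n ltFn] := ubnP #|F|; elim: n => // n IHn in B F ltFn *.
case=> sFB conn /acyclicbP acF.
have [F0 | [f Ff]] := set_0Vmem F.
  rewrite F0 cards0; apply/esym/eqP; rewrite subn_eq0; apply/card_le1_eqP => x y xB yB.
  by case/connectP: (conn x y xB yB) => [[|z p] //=]; rewrite F0 /adjF inE.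
have /edge_setP [x [y [exy fxy]]] := subsetP (subset_trans sFB (induced_edges_subset B)) f Ff.
subst f; have xy : x != y by apply: contraTneq exy => ->; rewrite irr_e.
have /andP [xB yB] := induced_edge_endpoints sFB Ff.
(* Deleting the bridge {x, y} leaves spanning trees of the components of x and y. *)
set F' := F :\ [set x; y]; set C := component F' B.
have sF'B : F' \subset induced_edges e B := subset_trans (subD1set F _) sFB.
have card_F : #|F| = #|F'|.+1 by rewrite (cardsD1 [set x; y] F) Ff.
have card_C a : a \in B -> #|F' :&: induced_edges e (C a)| = #|C a| - 1.
  move=> aB; apply: IHn.
    by rewrite card_F ltnS in ltFn; apply: leq_ltn_trans ltFn; exact/subset_leq_card/subsetIl.
  split; [exact: subsetIr | exact: connect_component | apply/acyclicbP].
  exact: acyclicb_subset (subset_trans (subsetIl _ _) (subD1set _ _)) acF.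
have disjC : [disjoint C x & C y].
  apply/pred0P => z; rewrite /= !inE; apply/negP => /andP [/andP [_ cxz] /andP [_ cyz]].
  move/negP: (acyclicb_bridge acF Ff xy); apply.
  by rewrite connect_adjF_sym in cyz; apply: connect_trans cxz cyz.
have splitB := component_bridge (fun z => conn x z xB) Ff.
rewrite card_F (card_edges_split sF'B splitB disjC) ?card_C //; try exact: component_closed.
have : 0 < #|C x| by apply/card_gt0P; exists x; rewrite inE xB connect0.
have : 0 < #|C y| by apply/card_gt0P; exists y; rewrite inE yB connect0.
by rewrite [in #|B|]splitB cardsU (disjoint_setI0 disjC) cards0 subn0 -/F' -/C; lia.
Qed.

Lemma spanning_tree_extend F :
  irreflexive e -> graph_connected e -> F \subset edge_set e -> acyclicb F ->
  exists2 T, spanning_tree_of e [set: V] T & F \subset T.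
Proof.
move=> irr_e conn sFE acF.
pose S := [set T : {set {set V}} | [&& F \subset T, T \subset edge_set e & acyclicb T]].
have FS : F \in S by rewrite inE subxx sFE acF.
case: (@arg_maxnP _ F [in S] (fun T => #|T|) FS) => T; rewrite inE => /and3P [FT sTE acT] maxT.
exists T => //; split; last exact/acyclicbP.
  by apply/subsetP => f Tf; rewrite inE (subsetP sTE _ Tf) subsetT.
move=> x y _ _; apply: (connect_stable (a := connect (adjF T) x)) (conn x y); last exact: connect0.
move=> u v cxu euv; apply/negPn/negP => Ncxv.
have Nuv : ~~ connect (adjF T) u v by apply: contra Ncxv; apply: connect_trans cxu.
have uv : u != v by apply: contraTneq euv => ->; rewrite irr_e.
have Tuv : [set u; v] \notin T by apply: contra Nuv => Tuv; apply: connect1.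
have : [set u; v] |: T \in S.
  have Euv : [set u; v] \in edge_set e by apply/edge_setP; exists u, v.
  by rewrite inE acyclicbU1 // subUset sTE sub1set Euv (subset_trans FT (subsetUr _ _)).
by move/maxT; rewrite cardsU1 Tuv /= add1n ltnn.
Qed.

End SpanningTrees.

Definition block_forest (V : finType) (P : {set {set V}})
    (g : {set V} -> {set {set V}}) : {set {set V}} :=
  \bigcup_(B in P) g B.

Section BlockForest.
Variables (V : finType) (e : rel V) (P : {set {set V}}) (g : {set V} -> {set {set V}}).
Hypothesis partP : partition P [set: V].
Hypothesis treeP : forall B, B \in P -> spanning_tree_of e B (g B).
Implicit Types (B : {set V}) (u v x y : V).
Local Notation U := (block_forest P g).

Lemma block_neq0 B : B \in P -> B != set0.
Proof. by case/and3P: partP => _ _ P0 PB; apply: contraNneq P0 => <-. Qed.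

Lemma block_uniq B B' u : B \in P -> B' \in P -> u \in B -> u \in B' -> B = B'.
Proof.
case/and3P: partP => _ tiP _ PB PB' uB uB'.
by rewrite -(def_pblock tiP PB uB) (def_pblock tiP PB' uB').
Qed.

Lemma block_forest_edgeP u v : [set u; v] \in U ->
  exists2 B, B \in P & [&& [set u; v] \in g B, u \in B & v \in B].
Proof.
case/bigcupP=> B PB guv; exists B => //.
by have [sg _ _] := treeP PB; rewrite guv (induced_edge_endpoints sg guv).
Qed.

Lemma block_forest_subset : U \subset edge_set e.
Proof.
apply/bigcupsP => B PB; have [sg _ _] := treeP PB.
exact: subset_trans sg (induced_edges_subset e B).
Qed.

Lemma connect_block_forest B x y :
  B \in P -> x \in B -> connect (adjF U) x y = (y \in B).
Proof.
move=> PB xB; apply/idP/idP => [|yB].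
  apply: (connect_stable (a := fun z => z \in B)) xB => u w uB.
  case/block_forest_edgeP=> B' PB' /and3P [_ uB' wB'].
  by rewrite (block_uniq PB PB' uB uB').
have [_ conn _] := treeP PB.
exact: connect_adjF_subset (bigcup_sup _ PB) _ _ (conn x y xB yB).
Qed.

Lemma block_forest_acyclic : acyclicb U.
Proof.
apply/forallP => x; apply/forallP => y; apply/implyP => /andP [Uxy xy].
have [B PB /and3P [gxy xB yB]] := block_forest_edgeP Uxy.
have [_ _ /acyclicbP acg] := treeP PB.
apply: contra (acyclicb_bridge acg gxy xy).
apply: (connect_sub_in (a := fun z => z \in B)) => // u w uB.
rewrite /adjF !in_setD1 => /andP [ne Uuw].
have [B' PB' /and3P [guw uB' wB']] := block_forest_edgeP Uuw.
by move: guw wB'; rewrite -(block_uniq PB PB' uB uB') ne => -> ->.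
Qed.

Lemma block_forest_restrict B : B \in P -> g B = U :&: induced_edges e B.
Proof.
move=> PB; have [sg _ _] := treeP PB; apply/setP => f; rewrite in_setI.
apply/idP/andP => [gf | [Uf indf]].
  by rewrite (subsetP (bigcup_sup _ PB)) ?(subsetP sg).
have /edge_setP [u [v [_ fuv]]] := subsetP block_forest_subset _ Uf; subst f.
have [B' PB' /and3P [guv uB' _]] := block_forest_edgeP Uf.
move: indf; rewrite inE subUset !sub1set => /andP [_ /andP [uB _]].
by rewrite (block_uniq PB PB' uB uB').
Qed.

Lemma block_forest_components : P = [set [set y | connect (adjF U) x y] | x : V].
Proof.
have comp B x : B \in P -> x \in B -> [set y | connect (adjF U) x y] = B.
  by move=> PB xB; apply/setP => y; rewrite inE (connect_block_forest _ PB xB).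
apply/setP => B; apply/idP/imsetP => [PB | [x _ ->]].
  by have /set0Pn [x xB] := block_neq0 PB; exists x => //; rewrite (comp B).
case/and3P: partP => /eqP covP tiP _.
have xP : x \in cover P by rewrite covP inE.
by rewrite (comp (pblock P x)) ?pblock_mem ?mem_pblock.
Qed.

Lemma card_block_forest : irreflexive e -> #|U| = #|V| - #|P|.
Proof.
move=> irr_e; pose h B := if B \in P then g B else set0.
have disj_h B B' : B != B' -> [disjoint h B & h B'].
  rewrite /h -setI_eq0; case: ifP => PB; case: ifP => PB' // neqB; rewrite ?set0I ?setI0 //.
  apply/eqP/setP => f; rewrite !inE; apply/negP => /andP [gf gf'].
  have [sg _ _] := treeP PB; have [sg' _ _] := treeP PB'.
  have /edge_setP [u [v [_ fuv]]] := subsetP (subset_trans sg (induced_edges_subset e B)) _ gf.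
  subst f; have /andP [uB _] := induced_edge_endpoints sg gf.
  have /andP [uB' _] := induced_edge_endpoints sg' gf'.
  by move/eqP: neqB; apply; apply: block_uniq uB uB'.
have -> : #|U| = \sum_(B in P) #|g B|.
  have -> : U = \bigcup_B h B by rewrite /block_forest big_mkcond.
  rewrite -sum1_card partition_disjoint_bigcup //.
  rewrite [RHS]big_mkcond; apply: eq_bigr => B _; rewrite sum1_card /h.
  by case: ifP; rewrite ?cards0.
have : \sum_(B in P) #|g B| + #|P| = #|V|.
  rewrite -sum1_card -big_split -cardsT (card_partition partP); apply: eq_bigr => B PB /=.
  have := block_neq0 PB; rewrite -card_gt0 (card_spanning_tree irr_e (treeP PB)).
  by move=> ?; rewrite subnK.
lia.
Qed.

End BlockForest.

Section Counting.
Variables (V : finType) (e : rel V).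
Hypothesis irr_e : irreflexive e.
Implicit Types (k m : nat) (F : {set {set V}}).
Local Notation tree_family := ({set {set V}} * {ffun {set V} -> {set {set V}}})%type.

Definition k_partitions k : {set {set {set V}}} :=
  [set P : {set {set V}} | partition P [set: V] && (#|P| == k)].

Definition spanning_trees (B : {set V}) : {set {set {set V}}} :=
  [set F : {set {set V}} | `[< spanning_tree_of e B F >] ].

Definition tree_partitions k : {set tree_family} :=
  [set p | (p.1 \in k_partitions k) &&
           (p.2 \in pfamily set0 (mem p.1) (fun B => mem (spanning_trees B)))].

Definition forests m : {set {set {set V}}} :=
  [set F : {set {set V}} | [&& F \subset edge_set e, acyclicb F & #|F| == m]].

Lemma Zmu_card_tree_partitions k : Zmu e k = #|tree_partitions k|.
Proof.
rewrite /Zmu -/(k_partitions k).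
transitivity (\sum_(P in k_partitions k) \prod_(B in P) \sum_(F in spanning_trees B) 1).
  by apply: eq_bigr => P _; apply: eq_bigr => B _; rewrite sum1_card.
transitivity (\sum_(P in k_partitions k)
               \sum_(g in pfamily set0 (mem P) (fun B => mem (spanning_trees B))) 1).
  apply: eq_bigr => P _; rewrite (big_distr_big_dep set0).
  by apply: eq_bigr => g _; rewrite big1_eq.
by rewrite pair_big_dep -sum1dep_card.
Qed.

Lemma tree_partitionsP k P g : (P, g) \in tree_partitions k ->
  [/\ #|P| = k, partition P [set: V], forall B, B \in P -> spanning_tree_of e B (g B)
    & forall B, B \notin P -> g B = set0].
Proof.
rewrite !inE /= => /andP [/andP [partP /eqP cardP] /pfamilyP [/supportP g0 treeP]].
by split=> // B /treeP; rewrite inE => /asboolP.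
Qed.

Lemma block_forest_inj k :
  {in tree_partitions k &, injective (fun p : tree_family => block_forest p.1 p.2)}.
Proof.
move=> [P1 g1] [P2 g2] /tree_partitionsP [_ part1 tree1 out1].
move=> /tree_partitionsP [_ part2 tree2 out2] /= U12.
have P12 : P1 = P2.
  by rewrite (block_forest_components part1 tree1) (block_forest_components part2 tree2) U12.
subst P2; congr (_, _); apply/ffunP => B.
have [PB | NPB] := boolP (B \in P1); last by rewrite out1 ?out2.
by rewrite (block_forest_restrict part1 tree1 PB) (block_forest_restrict part2 tree2 PB) U12.
Qed.

Lemma Zmu_leq_card_forests k : Zmu e k <= #|forests (#|V| - k)|.
Proof.
rewrite Zmu_card_tree_partitions -(card_in_imset (@block_forest_inj k)).
apply/subset_leq_card/subsetP => _ /imsetP [[P g] /tree_partitionsP [cardP partP treeP _] ->].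
by rewrite inE (block_forest_subset treeP) (block_forest_acyclic partP treeP)
  (card_block_forest partP treeP irr_e) cardP /=.
Qed.

Lemma card_forests_leq m : graph_connected e ->
  #|forests m| <= 'C(#|V|.-1, m) * num_spanning_trees e [set: V].
Proof.
move=> conn; rewrite mulnC -sum1_card.
apply: (@leq_trans (\sum_(F in forests m) \sum_(T in spanning_trees [set: V]) (F \subset T))).
  apply: leq_sum => F; rewrite inE => /and3P [sFE acF _].
  have [T treeT FT] := spanning_tree_extend irr_e conn sFE acF.
  have Ttree : T \in spanning_trees [set: V] by rewrite inE; apply/asboolP.
  by rewrite (bigD1 T Ttree) /= FT.
rewrite exchange_big /= -sum_nat_const; apply: leq_sum => T.
rewrite inE => /asboolP treeT.
have cardT : #|T| = #|V|.-1 by rewrite (card_spanning_tree irr_e treeT) cardsT subn1.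
rewrite -cardT -cards_draws.
rewrite -big_mkcondr /= sum1dep_card; apply/subset_leq_card/subsetP => F.
by rewrite !inE => /andP [/and3P [_ _ ->] ->].
Qed.

End Counting.

Lemma bin_leq_expn n j : 'C(n, j) <= n ^ j.
Proof.
apply: leq_trans (leq_pmulr _ (fact_gt0 j)) _.
rewrite bin_ffact ffact_prod -[in n ^ _](card_ord j) -prod_nat_const.
by apply: leq_prod => i _; apply: leq_subr.
Qed.

Theorem lemma5p1 (V : finType) (e : rel V) (k : nat) :
  symmetric e -> irreflexive e -> graph_connected e ->
  1 <= k <= #|V| ->
  Zmu e k <= 'C(#|V|.-1, k.-1) * num_spanning_trees e [set: V] /\
  'C(#|V|.-1, k.-1) * num_spanning_trees e [set: V]
    <= #|V| ^ k.-1 * num_spanning_trees e [set: V].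
Proof.
(* [edge_set e] consists of unordered pairs. *)
move=> _ irr_e conn /andP [k_gt0 k_le_n]; split.
  apply: leq_trans (Zmu_leq_card_forests irr_e k) _.
  have -> : #|V| - k = #|V|.-1 - k.-1 by lia.
  by rewrite -bin_sub ?card_forests_leq //; lia.
by rewrite leq_mul2r (leq_trans (leq_bin2l _ (leq_pred _))) ?bin_leq_expn ?orbT.
Qed.
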